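(* Let $w \in \mathfrak{S}_n$ and let $i \in \textsf{supp}(w)$ be such that the letter $i$ appears exactly once in every reduced word of $w$. Then deleting the letter $i$ from any reduced word of $w$ yields a word that is still reduced, and all words obtained in this way (from all reduced words of $w$) are reduced words of one and the same permutation $v$.
   Context: $\sigma_i$ ($1\le i\le n-1$) is the simple transposition swapping $i$ and $i+1$; products are compositions of maps. A reduced word of $w$ is a word $i_1\cdots i_\ell$ of minimal length $\ell=\ell(w)$ with $w=\sigma_{i_1}\cdots\sigma_{i_\ell}$; a word is reduced if it is a reduced word of the permutation it represents. $\textsf{supp}(w)$ is the set of letters appearing in (any) reduced word of $w$. *)

(* Permutations of {1,...,n} are modelled as 'S_n = {perm 'I_n},
   with the point k (1 <= k <= n) represented by the ordinal k-1. *)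
From mathcomp Require Import all_boot all_order all_fingroup.
Set Implicit Arguments.
Unset Strict Implicit.
Unset Printing Implicit Defensive.

(* The simple transposition sigma_i (1 <= i <= n-1) swapping i and i+1,
   i.e. the ordinals i-1 and i.  For letters outside [1, n-1] it is the
   identity, but such letters are excluded from words by [is_word]. *)
Definition simple_transp (n i : nat) : 'S_n :=
  match n return 'S_n with
  | 0 => 1%g
  | m.+1 => if (0 < i) && (i < m.+1)
            then tperm (inord i.-1 : 'I_m.+1) (inord i : 'I_m.+1) else 1%g
  end.

Definition is_word (n : nat) (u : seq nat) : bool :=
  all (fun i => (0 < i) && (i < n)) u.

(* The permutation sigma_{i1} o ... o sigma_{il} (composition of maps).
   MathComp's product is (p * q) x = q (p x), so f o g = g * f. *)
Fixpoint word_perm (n : nat) (u : seq nat) : 'S_n :=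
  match u with
  | [::] => 1%g
  | i :: u' => (word_perm n u' * simple_transp n i)%g
  end.

Definition reduced_word_of (n : nat) (w : 'S_n) (u : seq nat) : Prop :=
  is_word n u /\ word_perm n u = w /\
  forall u' : seq nat, is_word n u' -> word_perm n u' = w -> size u <= size u'.

Definition is_reduced (n : nat) (u : seq nat) : Prop :=
  reduced_word_of (word_perm n u) u.

Definition in_supp (n : nat) (w : 'S_n) (i : nat) : Prop :=
  exists u : seq nat, reduced_word_of w u /\ i \in u.

(* Write a reduced word of w as u ++ i :: v with i neither in u nor in v.  All
   letters j <> i preserve the cut {x < i} of 'I_n, so w = σ_u σ_i σ_v with σ_u,
   σ_v preserving the cut: w moves exactly one point x0 < i above the cut and one
   point x1 >= i below it, and σ_u σ_v = w (x0 x1) only depends on w.  With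
   lengths counted as inversions, ℓ(w (x0 x1)) >= ℓ(w) - 1 unless some z between
   x0 and x1 has w z between w x1 and w x0.  Such a z can be pushed to the cut
   along right descents of w, which yields a reduced word of w using i twice. *)

From mathcomp Require Import all_boot all_order all_fingroup zify.
Set Implicit Arguments.
Unset Strict Implicit.
Unset Printing Implicit Defensive.
Local Open Scope nat_scope.

Section SimpleTranspositions.
Variable n : nat.

Lemma simple_transpE (a b : 'I_n) : b = a.+1 :> nat -> simple_transp n b = tperm a b.
Proof.
case: n a b => [|m] a b; first by case: a.
move=> eb /=; rewrite eb ltn0Sn -eb ltn_ord /=.
by rewrite eb /= !inord_val -eb inord_val.
Qed.

Lemma simple_transp_out j : ~~ (0 < j < n) -> simple_transp n j = 1%g.
Proof. by case: n => [|m] //= /negbTE ->. Qed.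

Lemma simple_transp_adjacent j : 0 < j < n ->
  exists a b : 'I_n, [/\ b = a.+1 :> nat, nat_of_ord b = j & simple_transp n j = tperm a b].
Proof.
case/andP=> j_gt0 lt_jn; have lt_jn' : j.-1 < n by lia.
exists (Ordinal lt_jn'), (Ordinal lt_jn); split => //=; first lia.
by rewrite (@simple_transpE (Ordinal lt_jn') (Ordinal lt_jn)) //=; lia.
Qed.

Lemma word_perm_cat u v : word_perm n (u ++ v) = (word_perm n v * word_perm n u)%g.
Proof. by elim: u => [|j u IH] /=; rewrite ?mulg1 // IH mulgA. Qed.

Lemma word_perm_rcons u j : word_perm n (rcons u j) = (simple_transp n j * word_perm n u)%g.
Proof. by rewrite -cats1 word_perm_cat /= mul1g. Qed.

Lemma is_word_cat u v : is_word n (u ++ v) = is_word n u && is_word n v.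
Proof. exact: all_cat. Qed.

End SimpleTranspositions.

Section Length.
Variable n : nat.
Implicit Types (p : 'S_n) (a b x y : 'I_n).

Definition inversions p := [set e : 'I_n * 'I_n | (e.1 < e.2) && (p e.2 < p e.1)].
Definition perm_length p := #|inversions p|.

Lemma perm_length1 : perm_length 1%g = 0.
Proof.
apply/eqP; rewrite cards_eq0; apply/eqP/setP => -[x y].
by rewrite !inE /= !perm1; case: ltngtP.
Qed.

Lemma tperm_adjacent_ltE a b x y : b = a.+1 :> nat ->
  ((x, y) != (a, b)) && (x < y) =
  ((tperm a b x, tperm a b y) != (a, b)) && (tperm a b x < tperm a b y).
Proof.
move=> eb; rewrite !xpair_eqE.
by case: tpermP => [->|->|+ +]; case: tpermP => [->|->|+ +]; rewrite -!val_eqE /= => *; lia.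
Qed.

Lemma perm_length_mul_adjacent p a b : b = a.+1 :> nat ->
  perm_length (tperm a b * p) + (p b < p a) = perm_length p + (p a < p b).
Proof.
move=> eb; set t := tperm a b.
have t_inj : injective (fun e : 'I_n * 'I_n => (t e.1, t e.2)).
  by move=> [x y] [x' y'] [/perm_inj-> /perm_inj->].
have DE : inversions (t * p) :\ (a, b) =
          (fun e => (t e.1, t e.2)) @^-1: (inversions p :\ (a, b)).
  apply/setP => -[x y]; rewrite !inE /= !permM andbA [RHS]andbA.
  by rewrite (tperm_adjacent_ltE x y eb).
rewrite /perm_length (cardsD1 (a, b) (inversions (t * p))) DE card_preimset //.
rewrite (cardsD1 (a, b) (inversions p)) !inE /= !permM tpermL tpermR.
by rewrite (_ : a < b) ?eb //=; lia.
Qed.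

Lemma perm_length_simple_transp_le j p :
  perm_length (simple_transp n j * p) <= (perm_length p).+1.
Proof.
case: (boolP (0 < j < n)) => [/simple_transp_adjacent[a [b [eb _ ->]]] | /simple_transp_out->].
  by rewrite (leq_trans (leq_addr (p b < p a) _)) // perm_length_mul_adjacent // -[(perm_length p).+1]addn1 leq_add2l leq_b1.
by rewrite mul1g.
Qed.

Lemma perm_length_word_le u : perm_length (word_perm n u) <= size u.
Proof.
elim/last_ind: u => [|u j IH]; first by rewrite perm_length1.
by rewrite word_perm_rcons size_rcons (leq_trans (perm_length_simple_transp_le _ _)).
Qed.

Lemma perm_ascending_eq1 p : (forall a b, b = a.+1 :> nat -> p a < p b) -> p = 1%g.
Proof.
move=> asc.
have le_p : forall x : 'I_n, x <= p x.
  suff le_pk k (x : 'I_n) : nat_of_ord x = k -> k <= p x by move=> x; apply: le_pk.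
  elim: k x => [//|k IH] x ex; have lt_kn : k < n by have := ltn_ord x; lia.
  by have := asc (Ordinal lt_kn) x ex; have := IH (Ordinal lt_kn) erefl; lia.
have : \sum_(x : 'I_n) (p x - x) == 0.
  by rewrite sumnB // [X in _ - X](reindex_inj (@perm_inj _ p)) subnn.
rewrite sum_nat_eq0 => /forallP eq_p; apply/permP => x; apply/val_inj.
by rewrite perm1 /=; have := eq_p x; have := le_p x; lia.
Qed.

Lemma perm_length_word_exists p :
  exists u, [/\ is_word n u, word_perm n u = p & size u = perm_length p].
Proof.
elim: {p}_.+1 {-2}p (ltnSn (perm_length p)) => // k IH p.
case: (boolP [exists a : 'I_n, exists b : 'I_n, (b == a.+1 :> nat) && (p b < p a)]).
  move=> /existsP[a /existsP[b /andP[/eqP eb desc]]] lt_pk.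
  have := perm_length_mul_adjacent p eb; rewrite desc ltnNge ltnW //= => ell.
  have [u [wu pu su]] := IH (tperm a b * p)%g (ltac:(lia)).
  exists (rcons u b); split.
  - by rewrite /is_word all_rcons -/(is_word n u) wu andbT eb /= -eb ltn_ord.
  - by rewrite word_perm_rcons pu (simple_transpE eb) mulgA tperm2 mul1g.
  - by rewrite size_rcons su; lia.
rewrite negb_exists => /forallP nodesc _.
have -> : p = 1%g.
  apply: perm_ascending_eq1 => a b eb.
  have /nandP[/eqP//|] := existsPn (nodesc a) b.
  rewrite -leqNgt leq_eqVlt => /orP[/eqP/val_inj/perm_inj eab|//].
  by move: eb; rewrite eab; lia.
by exists [::]; rewrite perm_length1.
Qed.

Lemma perm_length_le_tperm p x y : x < y -> p y < p x ->
    (forall z : 'I_n, x < z < y -> (p z < p y) || (p x < p z)) ->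
  perm_length p <= (perm_length (tperm x y * p)).+1.
Proof.
move=> xy yx between; set t := tperm x y.
(* f moves by t the pairs that t reorders and keeps the others; the hypothesis
   on z says exactly that the kept pairs stay inverted in p ∘ t. *)
pose f (e : 'I_n * 'I_n) := if t e.1 < t e.2 then (t e.1, t e.2) else e.
have f_inv e : e \in inversions p :\ (x, y) -> f e \in inversions (t * p).
  case: e => a b; rewrite !inE /f /= => /andP[ne /andP[ab ba]].
  case: ifP => tab /=; rewrite !permM ?tpermK ?tab ?ab //=.
  move: ne tab ab ba (between a) (between b); rewrite xpair_eqE /t.
  by case: tpermP => [->|->|+ +]; case: tpermP => [->|->|+ +];
    rewrite -?val_eqE /= => *; lia.
have f_inj : {in inversions p :\ (x, y) &, injective f}.
  apply: (can_in_inj (g := f)) => -[a b]; rewrite !inE /f /= => /andP[_ /andP[ab _]].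
  by case tab: (t a < t b) => /=; rewrite /t ?tpermK ?ab ?tab.
rewrite /perm_length (cardsD1 (x, y)) inE /= xy yx add1n ltnS -(card_in_imset f_inj).
by apply/subset_leq_card/subsetP => _ /imsetP[e /f_inv + ->].
Qed.

Lemma reduced_word_ofE w u : reduced_word_of w u <->
  [/\ is_word n u, word_perm n u = w & size u = perm_length w].
Proof.
split=> [[wu [uw min_u]] | [wu uw su]].
  have [r [wr rw sr]] := perm_length_word_exists w.
  by split=> //; apply/eqP; rewrite eqn_leq -{1}sr min_u // -uw perm_length_word_le.
by do 2!split=> //; move=> u' _ u'w; rewrite su -u'w perm_length_word_le.
Qed.

Lemma reduced_rcons p a b r : b = a.+1 :> nat -> p b < p a ->
  reduced_word_of (tperm a b * p) r -> reduced_word_of p (rcons r b).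
Proof.
move=> eb desc /reduced_word_ofE[wr rp sr]; apply/reduced_word_ofE.
have := perm_length_mul_adjacent (tperm a b * p) eb.
rewrite !permM tpermL tpermR desc ltnNge ltnW //= mulgA tperm2 mul1g -sr => ell.
split; last by rewrite size_rcons; lia.
  by rewrite /is_word all_rcons -/(is_word n r) wr andbT eb /= -eb ltn_ord.
by rewrite word_perm_rcons rp (simple_transpE eb) mulgA tperm2 mul1g.
Qed.

End Length.

Section Cut.
Variables n i : nat.
Implicit Types (p q : 'S_n) (a b x y : 'I_n).

Definition preserves_cut p := forall x, (p x < i) = (x < i).

Lemma preserves_cut_mul p q :
  preserves_cut p -> preserves_cut q -> preserves_cut (p * q).
Proof. by move=> pP qP x; rewrite permM qP pP. Qed.

Lemma preserves_cut_tperm a b : (a < i) = (b < i) -> preserves_cut (tperm a b).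
Proof. by move=> ab x; case: tpermP => [->|->|//]; rewrite ab. Qed.

Lemma preserves_cut_word u : i \notin u -> preserves_cut (word_perm n u).
Proof.
elim: u => [_ x|j u IH]; first by rewrite perm1.
rewrite in_cons negb_or => /andP[ij iu] /=; apply: preserves_cut_mul (IH iu) _.
case: (boolP (0 < j < n)) => [/simple_transp_adjacent[a [b [eb bj ->]]] | /simple_transp_out->].
  by apply: preserves_cut_tperm; rewrite eb; move: ij; rewrite -bj; lia.
by move=> x; rewrite perm1.
Qed.

Definition cut_crossing p x0 x1 := [/\ x0 < i, i <= x1 & preserves_cut (tperm x0 x1 * p)].

Lemma cut_crossing_images p x0 x1 : cut_crossing p x0 x1 ->
  [/\ i <= p x0, p x1 < i & forall x, x != x0 -> x != x1 -> (p x < i) = (x < i)].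
Proof.
case=> x0i ix1 tpP; split.
- by have := tpP x1; rewrite permM tpermR; lia.
- by have := tpP x0; rewrite permM tpermL; lia.
- by move=> x xx0 xx1; rewrite -(tpP x) permM tpermD // eq_sym.
Qed.

Lemma cut_crossing_uniq p x0 x1 y0 y1 :
  cut_crossing p x0 x1 -> cut_crossing p y0 y1 -> x0 = y0 /\ x1 = y1.
Proof.
move=> cx cy; have [x0i ix1 _] := cx; have [y0i iy1 _] := cy.
have [px0 px1 _] := cut_crossing_images cx; have [_ _ py] := cut_crossing_images cy.
split; apply/eqP; apply: contraT => ne.
  have ne' : x0 != y1 by apply: contraTneq iy1 => <-; rewrite -ltnNge.
  by have := py x0 ne ne'; rewrite x0i; lia.
have ne' : x1 != y0 by apply: contraTneq y0i => <-; rewrite -leqNgt.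
by have := py x1 ne' ne; rewrite px1; lia.
Qed.

Lemma cut_crossing_tperm p x0 x1 a b : (a < i) = (b < i) -> cut_crossing p x0 x1 ->
  cut_crossing (tperm a b * p) (tperm a b x0) (tperm a b x1).
Proof.
move=> ab [x0i ix1 tpP]; have sP := preserves_cut_tperm ab.
split; rewrite ?sP //; first by rewrite leqNgt sP -leqNgt.
rewrite -tpermJ conjgE tpermV !mulgA -(mulgA _ (tperm a b) (tperm a b)) tperm2 mulg1 -mulgA.
exact: preserves_cut_mul.
Qed.

Lemma cut_crossing_word (u v : seq nat) : 0 < i < n -> i \notin u -> i \notin v ->
  exists x0 x1, cut_crossing (word_perm n (u ++ i :: v)) x0 x1 /\
    word_perm n (u ++ v) = (tperm x0 x1 * word_perm n (u ++ i :: v))%g.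
Proof.
move=> /simple_transp_adjacent[c [d [dc di si]]] iu iv.
have [uP vP] := (preserves_cut_word iu, preserves_cut_word iv).
set A := word_perm n u; set B := word_perm n v.
have -> : word_perm n (u ++ i :: v) = (B * tperm c d * A)%g by rewrite word_perm_cat /= si.
have tBA : (tperm (B^-1 c) (B^-1 d) * (B * tperm c d * A) = B * A)%g.
  by rewrite -tpermJ conjgE invgK !mulgA mulgKV -(mulgA _ (tperm c d) (tperm c d)) tperm2 mulg1.
exists (B^-1 c)%g, (B^-1 d)%g; split; last by rewrite word_perm_cat tBA.
split.
- by have := vP (B^-1 c)%g; rewrite permKV; lia.
- by have := vP (B^-1 d)%g; rewrite permKV; lia.
- by rewrite tBA; apply: preserves_cut_mul.
Qed.

End Cut.

Section Twice.
Variables n i : nat.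
Implicit Types (p : 'S_n) (a b c d q : 'I_n).

Definition reduced_word_twice p := exists r, reduced_word_of p r /\ 1 < count_mem i r.

Lemma reduced_word_twice_descent p a b : b = a.+1 :> nat -> p b < p a ->
  reduced_word_twice (tperm a b * p) -> reduced_word_twice p.
Proof.
move=> eb desc [r [red_r twice_r]]; exists (rcons r b); split.
  exact: reduced_rcons red_r.
by rewrite -cats1 count_cat (leq_trans twice_r) ?leq_addr.
Qed.

Lemma reduced_word_twice_boundary p c d : d = c.+1 :> nat -> nat_of_ord d = i ->
  p d < p c -> ~ preserves_cut i (tperm c d * p) -> reduced_word_twice p.
Proof.
move=> dc di desc not_cut.
have [r [wr rp sr]] := perm_length_word_exists (tperm c d * p)%g.
have ir : i \in r by apply: contraT => ir; case: not_cut; rewrite -rp; apply: preserves_cut_word.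
have red_r : reduced_word_of (tperm c d * p)%g r by apply/reduced_word_ofE.
exists (rcons r d); split; first exact: reduced_rcons red_r.
by rewrite -cats1 count_cat /= di eqxx addn1 ltnS -has_count has_pred1.
Qed.

Lemma reduced_word_twice_left p x0 x1 q : cut_crossing i p x0 x1 ->
  x0 < q < i -> p x1 < p q -> reduced_word_twice p.
Proof.
(* q moves right inside the lower block, or x1 moves left, peeling off right
   descents, until p has a descent at i while x0 still crosses the cut. *)
have [m] := ubnP (i - q + (x1 - i)); elim: m p x0 x1 q => // m IH p x0 x1 q lt_m.
move=> cross /andP[x0q qi] x1q; have [x0i ix1 _] := cross.
have [px0 px1 pP] := cut_crossing_images cross.
have lt_in : i < n by have := ltn_ord x1; lia.
case: (ltnP q.+1 i) => [q'i | iq'].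
  have lt_q'n : q.+1 < n by lia.
  pose q' := Ordinal lt_q'n.
  have pq' : p q' < i by rewrite pP -?val_eqE /=; lia.
  have [x1q' | q'x1] := ltnP (p x1) (p q').
    by apply: (IH p x0 x1 q') => //=; lia.
  have ne : p q' != p x1 :> nat by apply/eqP => /val_inj/perm_inj/(congr1 val) /=; lia.
  have cross' : cut_crossing i (tperm q q' * p) x0 x1.
    have := cut_crossing_tperm (a := q) (b := q') _ cross.
    by rewrite !tpermD -?val_eqE /=; [apply; lia | lia..].
  apply: (reduced_word_twice_descent (a := q) (b := q')) => //; first lia.
  apply: (IH _ x0 x1 q' _ cross'); rewrite ?permM ?tpermR ?tpermD -?val_eqE /=; lia.
have [x1i | x1i] := eqVneq (nat_of_ord x1) i.
  apply: (reduced_word_twice_boundary (c := q) (d := x1)) => //; first lia.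
  by move/(_ x0); rewrite permM tpermD -?val_eqE /=; lia.
have lt_zn : x1.-1 < n by have := ltn_ord x1; lia.
pose z := Ordinal lt_zn.
have pz : i <= p z by rewrite leqNgt pP -?val_eqE /=; lia.
have cross' : cut_crossing i (tperm z x1 * p) x0 z.
  have := cut_crossing_tperm (a := z) (b := x1) _ cross.
  by rewrite tpermR tpermD -?val_eqE /=; [apply; lia | lia..].
apply: (reduced_word_twice_descent (a := z) (b := x1)) => /=; [lia | lia |].
apply: (IH _ x0 z q _ cross'); rewrite ?permM ?tpermL ?tpermD -?val_eqE /=; lia.
Qed.

Lemma reduced_word_twice_right p x0 x1 q : cut_crossing i p x0 x1 ->
  i <= q < x1 -> p q < p x0 -> reduced_word_twice p.
Proof.
have [m] := ubnP (q - i + (i - x0)); elim: m p x0 x1 q => // m IH p x0 x1 q lt_m.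
move=> cross /andP[iq qx1] qx0; have [x0i ix1 _] := cross.
have [px0 px1 pP] := cut_crossing_images cross.
case: (ltnP i q) => [iq' | qi].
  have lt_q'n : q.-1 < n by have := ltn_ord q; lia.
  pose q' := Ordinal lt_q'n.
  have pq' : i <= p q' by rewrite leqNgt pP -?val_eqE /=; lia.
  have [q'x0 | x0q'] := ltnP (p q') (p x0).
    by apply: (IH p x0 x1 q') => //=; lia.
  have ne : p q' != p x0 :> nat by apply/eqP => /val_inj/perm_inj/(congr1 val) /=; lia.
  have cross' : cut_crossing i (tperm q' q * p) x0 x1.
    have := cut_crossing_tperm (a := q') (b := q) _ cross.
    by rewrite !tpermD -?val_eqE /=; [apply; lia | lia..].
  apply: (reduced_word_twice_descent (a := q') (b := q)) => /=; [lia | lia |].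
  apply: (IH _ x0 x1 q' _ cross'); rewrite ?permM ?tpermL ?tpermD -?val_eqE /=; lia.
have [x0i' | x0i'] := eqVneq (nat_of_ord x0).+1 i.
  apply: (reduced_word_twice_boundary (c := x0) (d := q)) => //; [lia | lia |].
  by move/(_ x1); rewrite permM tpermD -?val_eqE /=; lia.
have lt_zn : x0.+1 < n by have := ltn_ord x1; lia.
pose z := Ordinal lt_zn.
have pz : p z < i by rewrite pP -?val_eqE /=; lia.
have cross' : cut_crossing i (tperm x0 z * p) z x1.
  have := cut_crossing_tperm (a := x0) (b := z) _ cross.
  by rewrite tpermL tpermD -?val_eqE /=; [apply; lia | lia..].
apply: (reduced_word_twice_descent (a := x0) (b := z)) => //; first lia.
apply: (IH _ z x1 q _ cross'); rewrite ?permM ?tpermR ?tpermD -?val_eqE /=; lia.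
Qed.

Lemma reduced_word_twice_straddle p x0 x1 q : cut_crossing i p x0 x1 ->
  x0 < q < x1 -> p x1 < p q < p x0 -> reduced_word_twice p.
Proof.
move=> cross /andP[x0q qx1] /andP[x1q qx0].
case: (ltnP q i) => [qi | iq].
  by apply: (reduced_word_twice_left (q := q) cross); rewrite ?x0q.
by apply: (reduced_word_twice_right (q := q) cross); rewrite ?iq.
Qed.

End Twice.

Lemma count_mem1_split (T : eqType) (x : T) s : count_mem x s = 1 ->
  exists s1 s2, [/\ s = s1 ++ x :: s2, x \notin s1 & x \notin s2].
Proof.
move=> cx; have xs : x \in s by rewrite -has_pred1 has_count cx.
move: cx; case/splitPr: xs => s1 s2; rewrite count_cat /= eqxx => cx.
by exists s1, s2; split=> //; apply/count_memPn; lia.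
Qed.

Lemma rem_cat_notin (T : eqType) (x : T) s1 s2 : x \notin s1 -> rem x (s1 ++ x :: s2) = s1 ++ s2.
Proof.
elim: s1 => [|y s1 IH] /=; first by rewrite eqxx.
by rewrite in_cons negb_or eq_sym => /andP[/negbTE-> /IH->].
Qed.

Lemma reduced_word_delete n (w : 'S_n) i u v x0 x1 : ~ reduced_word_twice i w ->
  reduced_word_of w (u ++ i :: v) -> i \notin u -> i \notin v -> cut_crossing i w x0 x1 ->
  reduced_word_of (tperm x0 x1 * w) (u ++ v).
Proof.
move=> not_twice /reduced_word_ofE[wu uw su] iu iv cross.
have /andP[wu1 /andP[in_i wv]] : is_word n u && is_word n (i :: v) by rewrite -is_word_cat.
have [y0 [y1 [cross' vE]]] := cut_crossing_word in_i iu iv.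
rewrite uw in cross' vE; have [ey0 ey1] := cut_crossing_uniq cross cross'; subst y0 y1.
have [x0i ix1 _] := cross; have [wx0 wx1 _] := cut_crossing_images cross.
apply/reduced_word_ofE; split=> //; first by rewrite is_word_cat wu1.
have le_size : perm_length (tperm x0 x1 * w) <= size (u ++ v).
  by rewrite -vE perm_length_word_le.
have le_len : perm_length w <= (perm_length (tperm x0 x1 * w)).+1.
  apply: perm_length_le_tperm => [||z /andP[x0z zx1]]; [lia | lia |].
  apply: contraT; rewrite negb_or -!leqNgt => /andP[zx1' x0z'].
  case: not_twice; apply: (reduced_word_twice_straddle (q := z) cross); first by rewrite x0z.
  have [z0 z1] : z != x0 /\ z != x1 by rewrite -!val_eqE /=; lia.
  by rewrite !ltn_neqAle zx1' x0z' !(inj_eq val_inj) !(inj_eq perm_inj) z0 eq_sym z1.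
by move: su le_size le_len; rewrite !size_cat /=; lia.
Qed.

Theorem corollary2p5 (n : nat) (w : 'S_n) (i : nat) :
  in_supp w i ->
  (forall u : seq nat, reduced_word_of w u -> count_mem i u = 1) ->
  (forall u : seq nat, reduced_word_of w u -> is_reduced n (rem i u)) /\
  (exists v : 'S_n, forall u : seq nat, reduced_word_of w u ->
      reduced_word_of v (rem i u)).
Proof.
move=> [u0 [red_u0 _]] once.
have not_twice : ~ reduced_word_twice i w by case=> r [/once->].
have [u1 [v1 [eu0 iu1 iv1]]] := count_mem1_split (once _ red_u0).
have /reduced_word_ofE[+ wu0 _] := red_u0; rewrite eu0 is_word_cat => /and3P[_ in_i _].
have [x0 [x1 [cross _]]] := cut_crossing_word in_i iu1 iv1; rewrite -eu0 wu0 in cross.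
have red_rem u : reduced_word_of w u -> reduced_word_of (tperm x0 x1 * w) (rem i u).
  move=> red_u; have [u' [v' [eu iu iv]]] := count_mem1_split (once _ red_u).
  by rewrite eu rem_cat_notin //; apply: reduced_word_delete iu iv cross; rewrite -?eu.
split; last by exists (tperm x0 x1 * w)%g.
by move=> u /red_rem red; have [_ [vE _]] := red; rewrite /is_reduced vE.
Qed.
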